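(* Let $\mathsf V$ be a variety, $h:\mathbf F_{\mathsf V}(z)\to\prod_{k=1}^m\mathbf E_k$ an algebraic e-generalization problem, and $\theta\in\mathscr G(h)$. Then the natural epimorphism $n_\theta:\mathbf F_{\mathsf V}(z)\to\mathbf F_{\mathsf V}(z)/\theta$ is a solution of $h$ if and only if $\theta$ is projective. Moreover, in that case $n_\theta$ is the top element of $\Pi_\theta(h)$ with respect to the generality order $\sqsubseteq$.
   Context: $\mathbf F_{\mathsf V}(z)$ is the free algebra of the variety $\mathsf V$ on one generator $z$. An algebra is projective in $\mathsf V$ iff it is a retract of a free algebra; exact if isomorphic to a finitely generated subalgebra of a finitely generated free algebra of $\mathsf V$. A congruence $\theta$ of $\mathbf F_{\mathsf V}(z)$ is projective if $\mathbf F_{\mathsf V}(z)/\theta$ is projective in $\mathsf V$. An algebraic e-generalization problem is a homomorphism $h:\mathbf F_{\mathsf V}(z)\to\prod_{k=1}^m\mathbf E_k$ with each $\mathbf E_k$ 1-generated exact and each $p_k\circ h$ surjective. A solution of $h$ is a homomorphism $g:\mathbf F_{\mathsf V}(z)\to\mathbf P$, $\mathbf P$ finitely generated projective, with $f\circ g=h$ for some homomorphism $f$. $\mathscr A(h)$ is the set of solutions of $h$ and $\mathscr G(h)=\{\ker(g):g\in\mathscr A(h)\}$. For $\theta\in\mathscr G(h)$, $\Pi_\theta(h)=\{g\in\mathscr A(h):\ker(g)=\theta\}$. For homomorphisms $g:\mathbf A\to\mathbf B$, $g':\mathbf A\to\mathbf B'$, $g\sqsubseteq g'$ iff there is a homomorphism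 $f:\mathbf B'\to\mathbf B$ with $f\circ g'=g$. *)

From HB Require Import structures.
From Stdlib Require Import RelationClasses.
From mathcomp Require Import all_boot.
Set Implicit Arguments. Unset Strict Implicit. Unset Printing Implicit Defensive.

Record signature := Signature { op_sym : Type; arity : op_sym -> nat }.
Arguments arity {s} _.

Inductive term (S : signature) (X : Type) : Type :=
| Var : X -> term S X
| App : forall o : op_sym S, ('I_(arity o) -> term S X) -> term S X.
Arguments Var {S X} _.
Arguments App {S X} _ _.

Unset Implicit Arguments.
(* Algebras, with carrier a setoid: [aeq] is the equality of the algebra. *)
Record algebra (S : signature) := Algebra {
  car :> Type;
  aeq : car -> car -> Prop;
  aeq_equiv : Equivalence aeq;
  interp : forall o : op_sym S, ('I_(arity o) -> car) -> car;
  interp_compat : forall (o : op_sym S) (a b : 'I_(arity o) -> car),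
      (forall i, aeq (a i) (b i)) -> aeq (interp o a) (interp o b) }.
Arguments aeq {S} _ _ _.
Set Implicit Arguments.
Arguments interp {S} _ _ _.
Arguments aeq_equiv {S} _.
Arguments interp_compat {S} _ _ _ _ _.
Arguments car {S} _.

Unset Implicit Arguments.
Record hom (S : signature) (A B : algebra S) := Hom {
  hfun :> A -> B;
  hresp : forall x y, aeq A x y -> aeq B (hfun x) (hfun y);
  hop : forall (o : op_sym S) (a : 'I_(arity o) -> A),
      aeq B (hfun (interp A o a)) (interp B o (fun i => hfun (a i))) }.

Arguments hom {S} _ _.
Arguments hfun {S A B} _ _.
Arguments hresp {S A B} _ _ _ _.
Arguments hop {S A B} _ _ _.
Set Implicit Arguments.
Fixpoint eval (S : signature) (A : algebra S) (X : Type) (v : X -> A)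
  (t : term S X) : A :=
  match t with
  | Var x => v x
  | App o ts => interp A o (fun i => eval v (ts i))
  end.

(* Identities s ~ t (variables in nat); a variety is given by a set of them. *)
Definition satisfies (S : signature) (A : algebra S) (s t : term S nat) :=
  forall v : nat -> A, aeq A (eval v s) (eval v t).

Definition inV (S : signature) (Eq : term S nat -> term S nat -> Prop)
  (A : algebra S) := forall s t, Eq s t -> satisfies A s t.

(* The free algebra F_V(X): terms modulo the identities valid in V. *)
Definition feq (S : signature) (Eq : term S nat -> term S nat -> Prop)
  (X : Type) (s t : term S X) : Prop :=
  forall A : algebra S, inV Eq A -> forall v : X -> A,
    aeq A (eval v s) (eval v t).

Lemma aeq_refl S (A : algebra S) (x : A) : aeq A x x.
Proof. by case: (aeq_equiv A) => r _ _; apply: r. Qed.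
Lemma aeq_sym S (A : algebra S) (x y : A) : aeq A x y -> aeq A y x.
Proof. by case: (aeq_equiv A) => _ s _; apply: s. Qed.
Lemma aeq_trans S (A : algebra S) (x y z : A) : aeq A x y -> aeq A y z -> aeq A x z.
Proof. by case: (aeq_equiv A) => _ _ t; apply: t. Qed.

Lemma feq_equiv S Eq X : Equivalence (@feq S Eq X).
Proof.
split.
- by move=> s A _ v; apply: aeq_refl.
- by move=> s t H A HA v; apply: aeq_sym; apply: H.
- by move=> s t u H1 H2 A HA v; apply: aeq_trans (H1 A HA v) (H2 A HA v).
Qed.

Lemma feq_compat S Eq X o (a b : 'I_(arity o) -> term S X) :
  (forall i, feq Eq (a i) (b i)) -> feq Eq (App o a) (App o b).
Proof. by move=> H A HA v /=; apply: interp_compat => i; apply: H. Qed.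

Definition free (S : signature) (Eq : term S nat -> term S nat -> Prop)
  (X : Type) : algebra S :=
  @Algebra S (term S X) (@feq S Eq X) (feq_equiv Eq X) App
    (@feq_compat S Eq X).

Inductive Sg (S : signature) (A : algebra S) (I : Type) (gens : I -> A) : A -> Prop :=
| sg_gen : forall i, Sg gens (gens i)
| sg_op : forall o (a : 'I_(arity o) -> A),
    (forall i, Sg gens (a i)) -> Sg gens (interp A o a).

Definition sub_car S (A : algebra S) I (gens : I -> A) := {x : A | Sg gens x}.

Definition sub_aeq S (A : algebra S) I (gens : I -> A) (x y : sub_car gens) :=
  aeq A (proj1_sig x) (proj1_sig y).

Lemma sub_aeq_equiv S (A : algebra S) I (gens : I -> A) :
  Equivalence (@sub_aeq S A I gens).
Proof.
split.
- by move=> x; apply: aeq_refl.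
- by move=> x y; apply: aeq_sym.
- by move=> x y z; apply: aeq_trans.
Qed.

Definition sub_interp S (A : algebra S) I (gens : I -> A) o
  (a : 'I_(arity o) -> sub_car gens) : sub_car gens :=
  exist _ (interp A o (fun i => proj1_sig (a i)))
    (sg_op (fun i => proj2_sig (a i))).

Lemma sub_compat S (A : algebra S) I (gens : I -> A) o
  (a b : 'I_(arity o) -> sub_car gens) :
  (forall i, sub_aeq (a i) (b i)) -> sub_aeq (sub_interp a) (sub_interp b).
Proof. by move=> H; apply: interp_compat. Qed.

Definition subalg S (A : algebra S) I (gens : I -> A) : algebra S :=
  @Algebra S (sub_car gens) (@sub_aeq S A I gens) (sub_aeq_equiv gens)
    (@sub_interp S A I gens) (@sub_compat S A I gens).

Definition generates S (A : algebra S) I (gens : I -> A) :=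
  forall x : A, exists2 y, Sg gens y & aeq A x y.

Definition fin_generated S (A : algebra S) :=
  exists k (gens : 'I_k -> A), generates gens.

Definition one_generated S (A : algebra S) :=
  exists e : A, generates (fun _ : unit => e).

Definition iso S (A B : algebra S) :=
  exists (f : hom A B) (g : hom B A),
    (forall x, aeq A (g (f x)) x) /\ (forall y, aeq B (f (g y)) y).

Definition exact S (Eq : term S nat -> term S nat -> Prop) (A : algebra S) :=
  exists n k (gens : 'I_k -> free Eq 'I_n), iso A (subalg gens).

Definition projective S (Eq : term S nat -> term S nat -> Prop) (P : algebra S) :=
  exists (X : Type) (i : hom P (free Eq X)) (r : hom (free Eq X) P),
    forall x, aeq P (r (i x)) x.

Definition prod_aeq S m (E : 'I_m -> algebra S)
  (f g : forall k, E k) := forall k, aeq (E k) (f k) (g k).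

Lemma prod_aeq_equiv S m (E : 'I_m -> algebra S) : Equivalence (prod_aeq (E:=E)).
Proof.
split.
- by move=> f k; apply: aeq_refl.
- by move=> f g H k; apply: aeq_sym.
- by move=> f g h H1 H2 k; apply: aeq_trans (H1 k) (H2 k).
Qed.

Definition prod_interp S m (E : 'I_m -> algebra S) o
  (a : 'I_(arity o) -> forall k, E k) : forall k, E k :=
  fun k => interp (E k) o (fun i => a i k).

Lemma prod_compat S m (E : 'I_m -> algebra S) o
  (a b : 'I_(arity o) -> forall k, E k) :
  (forall i, prod_aeq (a i) (b i)) -> prod_aeq (prod_interp a) (prod_interp b).
Proof. by move=> H k; apply: interp_compat => i; apply: H. Qed.

Definition prod_alg S m (E : 'I_m -> algebra S) : algebra S :=
  @Algebra S (forall k, E k) (@prod_aeq S m E) (prod_aeq_equiv E)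
    (@prod_interp S m E) (@prod_compat S m E).

Definition surjective_hom S (A B : algebra S) (f : A -> B) :=
  forall y : B, exists x : A, aeq B (f x) y.

Definition e_gen_problem S (Eq : term S nat -> term S nat -> Prop) m
  (E : 'I_m -> algebra S) (h : hom (free Eq unit) (prod_alg E)) :=
  forall k, exact Eq (E k) /\ one_generated (E k) /\
    surjective_hom (fun x : free Eq unit => (h x : forall k, E k) k).

Definition is_solution S (Eq : term S nat -> term S nat -> Prop) m
  (E : 'I_m -> algebra S) (h : hom (free Eq unit) (prod_alg E))
  (P : algebra S) (g : hom (free Eq unit) P) :=
  fin_generated P /\ projective Eq P /\
  exists f : hom P (prod_alg E), forall x, aeq (prod_alg E) (f (g x)) (h x).

Unset Implicit Arguments.
Record congruence S (A : algebra S) := Congruence {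
  crel :> A -> A -> Prop;
  crel_equiv : Equivalence crel;
  crel_sub : forall x y, aeq A x y -> crel x y;
  crel_compat : forall (o : op_sym S) (a b : 'I_(arity o) -> A),
      (forall i, crel (a i) (b i)) -> crel (interp A o a) (interp A o b) }.

Arguments congruence {S} _.
Arguments crel {S A} _ _ _.
Arguments crel_equiv {S A} _.
Arguments crel_sub {S A} _ _ _ _.
Arguments crel_compat {S A} _ _ _ _ _.
Set Implicit Arguments.
Definition kernel S (A B : algebra S) (g : hom A B) : A -> A -> Prop :=
  fun x y => aeq B (g x) (g y).

Definition same_rel T (R1 R2 : T -> T -> Prop) := forall x y, R1 x y <-> R2 x y.

Definition quotient S (A : algebra S) (th : congruence A) : algebra S :=
  @Algebra S A th (crel_equiv th) (interp A) (@crel_compat S A th).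

Lemma nat_epi_resp S (A : algebra S) (th : congruence A) (x y : A) :
  aeq A x y -> aeq (quotient th) x y.
Proof. exact: crel_sub. Qed.

Lemma nat_epi_op S (A : algebra S) (th : congruence A) o (a : 'I_(arity o) -> A) :
  aeq (quotient th) (interp A o a) (interp (quotient th) o (fun i => a i)).
Proof. by case: (crel_equiv th) => r _ _; apply: r. Qed.

Definition nat_epi S (A : algebra S) (th : congruence A) : hom A (quotient th) :=
  @Hom S A (quotient th) (fun x => x) (@nat_epi_resp S A th) (@nat_epi_op S A th).

Definition in_G S (Eq : term S nat -> term S nat -> Prop) m
  (E : 'I_m -> algebra S) (h : hom (free Eq unit) (prod_alg E))
  (th : congruence (free Eq unit)) :=
  exists (P : algebra S) (g : hom (free Eq unit) P),
    is_solution h g /\ same_rel th (kernel g).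

Definition in_Pi S (Eq : term S nat -> term S nat -> Prop) m
  (E : 'I_m -> algebra S) (h : hom (free Eq unit) (prod_alg E))
  (th : congruence (free Eq unit)) (P : algebra S) (g : hom (free Eq unit) P) :=
  is_solution h g /\ same_rel th (kernel g).

Definition gen_le S (A B B' : algebra S) (g : hom A B) (g' : hom A B') :=
  exists f : hom B' B, forall x, aeq B (f (g' x)) (g x).

Definition projective_cong S (Eq : term S nat -> term S nat -> Prop)
  (th : congruence (free Eq unit)) := projective Eq (quotient th).

From mathcomp Require Import all_boot.

(* Since θ is the kernel of a solution g with h = f ∘ g, it is contained in the
   kernel of h, so h factors through n_θ by the homomorphism theorem. The
   quotient F_V(z)/θ is generated by the class of z, so n_θ is a solution
   exactly when F_V(z)/θ is projective. Every g with kernel θ factors through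
   n_θ by the same theorem, which makes n_θ the top of Π_θ(h). *)

Section Generation.
Variable S : signature.

Lemma one_generated_fin_generated (A : algebra S) :
  one_generated A -> fin_generated A.
Proof.
case=> e gen_e; exists 1, (fun _ => e) => x.
have [y Sg_y eq_xy] := gen_e x; exists y => //.
elim: Sg_y {eq_xy} => [_|o a _ IH]; first exact: (sg_gen _ ord0).
exact: sg_op.
Qed.

Lemma quotient_free_unit_one_generated (Eq : term S nat -> term S nat -> Prop)
    (th : congruence (free Eq unit)) :
  one_generated (quotient th).
Proof.
exists (Var tt) => t; exists t; last exact: aeq_refl.
elim: t => [[]|o ts IH]; first exact: sg_gen.
exact: (sg_op (A := quotient th)).
Qed.

End Generation.

Section HomomorphismTheorem.
Variables (S : signature) (A B : algebra S) (th : congruence A) (g : hom A B).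
Hypothesis th_sub_ker : forall x y, th x y -> kernel g x y.

Definition quotient_lift : hom (quotient th) B :=
  @Hom S (quotient th) B g th_sub_ker (hop g).

Lemma gen_le_nat_epi : gen_le g (nat_epi th).
Proof. by exists quotient_lift => x; apply: aeq_refl. Qed.

End HomomorphismTheorem.

Lemma gen_le_kernel_sub S (A B C : algebra S) (h : hom A C) (g : hom A B) :
  gen_le h g -> forall x y, kernel g x y -> kernel h x y.
Proof.
case=> f fgh x y gxy.
apply: aeq_trans (aeq_sym (fgh x)) (aeq_trans _ (fgh y)).
exact: hresp.
Qed.

Lemma kernel_nat_epi S (A : algebra S) (th : congruence A) :
  same_rel th (kernel (nat_epi th)).
Proof. by []. Qed.

Theorem proposition4p17 (S : signature) (Eq : term S nat -> term S nat -> Prop)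
  (m : nat) (E : 'I_m -> algebra S) (h : hom (free Eq unit) (prod_alg E)) :
  e_gen_problem h ->
  forall th : congruence (free Eq unit), in_G h th ->
    (is_solution h (nat_epi th) <-> projective_cong th) /\
    (is_solution h (nat_epi th) ->
       in_Pi h th (nat_epi th) /\
       forall (P : algebra S) (g : hom (free Eq unit) P),
         in_Pi h th g -> gen_le g (nat_epi th)).
Proof.
move=> _ th [P0 [g0 [[_ [_ hg0]] th_ker_g0]]].
have h_nat_epi : gen_le h (nat_epi th).
  apply: gen_le_nat_epi => x y /th_ker_g0.
  exact: gen_le_kernel_sub hg0 x y.
split; first split.
- by case=> _ [].
- move=> proj_th; split; first exact/one_generated_fin_generated/quotient_free_unit_one_generated.
  by split.
- move=> sol_th; split; first by split; last exact: kernel_nat_epi.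
  move=> P g [_ th_ker_g].
  by apply: gen_le_nat_epi => x y /th_ker_g.
Qed.
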